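(* For every integer $\ell\geq 1$ there is a first-order prenex sentence $\sigma_\ell$ over $\tau_{\mathsf{ord}}$ with exactly $q^*(\ell)$ quantifiers that separates $L_{\leq\ell}$ from $L_{>\ell}$, and whose quantifier prefix strictly alternates between $\exists$ and $\forall$ and ends with $\forall$.
   Context: Vocabulary $\tau_{\mathsf{ord}} = \langle < ;\ \mathsf{min}, \mathsf{max}\rangle$ with $<$ binary and $\mathsf{min},\mathsf{max}$ constants. For $\ell \geq 1$, $L_\ell$ is the linear order with $\ell+1$ elements (its length is $\ell$), with $\mathsf{min},\mathsf{max}$ interpreted as first and last elements. $L_{\leq \ell}=\{L_1,\dots,L_\ell\}$, $L_{>\ell}=\{L_m: m>\ell\}$. A sentence separates $\mathcal{A}$ from $\mathcal{B}$ if it is true in all structures of $\mathcal{A}$ and false in all of $\mathcal{B}$. Define $q^*_\forall, q^*_\exists : \mathbb{Z}_{\geq 1}\to\mathbb{N}$ by $q^*_\forall(1)=1$, $q^*_\exists(1)=2$, $q^*_\forall(2)=2$, and $q^*_\exists(2\ell) = q^*_\forall(\ell)+1$ ($\ell\geq 1$); $q^*_\exists(2\ell+1) = q^*_\forall(\ell+1)+1$ ($\ell \geq 1$); $q^*_\forall(2\ell) = q^*_\exists(\ell)+1$ ($\ell\geq 2$); $q^*_\forall(2\ell+1) = q^*_\exists(\ell)+1$ ($\ell\geq 1$). Let $q^*(\ell) = \min(q^*_\exists(\ell), q^*_\forall(\ell))$. *)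

From mathcomp Require Import all_boot.
Set Implicit Arguments. Unset Strict Implicit. Unset Printing Implicit Defensive.

Inductive term : Type :=
| TVar of nat
| TMin
| TMax.

Inductive form : Type :=
| FLt of term & term
| FEq of term & term
| FNot of form
| FAnd of form & form
| FOr of form & form
| FEx of nat & form
| FAll of nat & form.

(** The structure L_m : linear order on {0,...,m} (m+1 elements),
    min = 0, max = m.  Assignments are maps nat -> nat. *)
Definition eval_term (m : nat) (rho : nat -> nat) (t : term) : nat :=
  match t with
  | TVar x => rho x
  | TMin => 0
  | TMax => m
  end.

Definition upd (rho : nat -> nat) (x a : nat) : nat -> nat :=
  fun y => if y == x then a else rho y.

Fixpoint sat (m : nat) (rho : nat -> nat) (f : form) : Prop :=
  match f with
  | FLt s t => eval_term m rho s < eval_term m rho t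
  | FEq s t => eval_term m rho s = eval_term m rho t
  | FNot g => ~ sat m rho g
  | FAnd g h => sat m rho g /\ sat m rho h
  | FOr g h => sat m rho g \/ sat m rho h
  | FEx x g => exists a, a <= m /\ sat m (upd rho x a) g
  | FAll x g => forall a, a <= m -> sat m (upd rho x a) g
  end.

(** Truth of a sentence in L_m (assignment irrelevant for sentences;
    we use the constant assignment to min). *)
Definition holds (m : nat) (f : form) : Prop := sat m (fun _ => 0) f.

Definition term_has (x : nat) (t : term) : bool :=
  if t is TVar y then y == x else false.

Fixpoint free (x : nat) (f : form) : bool :=
  match f with
  | FLt s t | FEq s t => term_has x s || term_has x t
  | FNot g => free x g
  | FAnd g h | FOr g h => free x g || free x h
  | FEx y g | FAll y g => (y != x) && free x g
  end.

Definition sentence (f : form) : Prop := forall x, free x f = false.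

Fixpoint qfree (f : form) : bool :=
  match f with
  | FLt _ _ | FEq _ _ => true
  | FNot g => qfree g
  | FAnd g h | FOr g h => qfree g && qfree h
  | FEx _ _ | FAll _ _ => false
  end.

Fixpoint prenex (f : form) : bool :=
  match f with
  | FEx _ g | FAll _ g => prenex g
  | g => qfree g
  end.

Fixpoint nquant (f : form) : nat :=
  match f with
  | FLt _ _ | FEq _ _ => 0
  | FNot g => nquant g
  | FAnd g h | FOr g h => nquant g + nquant h
  | FEx _ g | FAll _ g => (nquant g).+1
  end.

(** the leading quantifier prefix (true = exists, false = forall) *)
Fixpoint qprefix (f : form) : seq bool :=
  match f with
  | FEx _ g => true :: qprefix g
  | FAll _ g => false :: qprefix g
  | _ => [::]
  end.

Definition alternating (p : seq bool) : bool :=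
  if p is b :: p' then path (fun a c => a != c) b p' else true.

Definition ends_with_forall (p : seq bool) : bool :=
  if p is b :: p' then ~~ last b p' else false.

Definition separates_le_gt (l : nat) (f : form) : Prop :=
  (forall m, 1 <= m <= l -> holds m f) /\
  (forall m, l < m -> ~ holds m f).

(** * The functions q*_exists, q*_forall, q*.
    qaux fuel l = (q*_exists l, q*_forall l) for 1 <= l <= fuel:
    q*_E(1)=2, q*_A(1)=1, q*_A(2)=2,
    q*_E(l) = q*_A(ceil(l/2)) + 1  (l >= 2),
    q*_A(l) = q*_E(floor(l/2)) + 1 (l >= 3). *)
Fixpoint qaux (fuel l : nat) : nat * nat :=
  match fuel with
  | 0 => (0, 0)
  | fuel'.+1 =>
    if l <= 1 then (2, 1)
    else ((qaux fuel' (uphalf l)).2 + 1,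
          if l == 2 then 2 else (qaux fuel' l./2).1 + 1)
  end.

Definition qstarE (l : nat) : nat := (qaux l l).1.
Definition qstarA (l : nat) : nat := (qaux l l).2.
Definition qstar (l : nat) : nat := minn (qstarE l) (qstarA l).

Example qstar_vals :
  [seq (qstarE l, qstarA l) | l <- iota 1 8] =
  [:: (2,1); (2,2); (3,3); (3,3); (4,3); (4,4); (4,4); (4,4)].
Proof. by []. Qed.

From mathcomp Require Import all_boot zify.
From Stdlib Require Import Classical.
Set Implicit Arguments. Unset Strict Implicit. Unset Printing Implicit Defensive.

(* For points a <= b of a linear order, b - a <= n holds iff every z strictly between them
   has z - a <= n/2 or b - z <= n - 1 - n/2, and (when a < b) iff some w in (a, b] has
   w - a <= ceil(n/2) and b - w <= floor(n/2).  Unfolding the first description costs a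
   universal quantifier, the second an existential one, and the two recursive halves of
   either step can share all their quantifiers: the next bound variable tells, by comparing
   itself with z (resp. w), which half it is serving.  This gives a prenex sentence
   "max - min <= l" with an alternating prefix whose length is q*_forall(l) rounded up to
   an odd number (prefix starting with forall) or q*_exists(l) rounded up to an even
   number (prefix starting with exists); an invariant of the pair (q*_exists, q*_forall)
   shows that the smaller of the two rounded counts is exactly q*(l). *)

(** * Counting quantifiers *)

Lemma qaux_fuel f f' n : 1 <= n -> n <= f -> n <= f' -> qaux f n = qaux f' n.
Proof.
elim: f f' n => [|f IH] [|f'] n n_gt0 le_nf le_nf' /=; try lia.
case: ifP => // n_gt1; rewrite (IH f' (uphalf n)) ?(IH f' n./2) //; lia.
Qed.

Lemma qstarE_rec n : 2 <= n -> qstarE n = (qstarA (uphalf n)).+1.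
Proof.
case: n => [|n] n_ge2 //; rewrite /qstarE /qstarA /= ifN; last lia.
rewrite (@qaux_fuel n (uphalf n.+1)) /=; lia.
Qed.

Lemma qstarA_rec n : 3 <= n -> qstarA n = (qstarE n./2).+1.
Proof.
case: n => [|n] n_ge3 //; rewrite /qstarE /qstarA /= ifN /=; last lia.
rewrite ifN; last lia.
rewrite (@qaux_fuel n (uphalf n)); lia.
Qed.

(* As l grows, (q*_exists l, q*_forall l) walks along the chain (2,1), (2,2), (3,3), (4,3),
   (4,4), (4,5), (5,5), (6,5), ... of [balanced] pairs, one step at a time apart from the
   jump from (2,2) to (3,3). *)
Definition balanced (e a : nat) : Prop :=
  e = a \/ (e = a.+1 /\ odd a) \/ (a = e.+1 /\ ~~ odd e).

Definition grows_by_one (e a e' a' : nat) : Prop :=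
  e' + a' = e + a \/ e' + a' = (e + a).+1 \/ (e = 2 /\ a = 2 /\ e' = 3 /\ a' = 3).

Lemma qstar_balanced_grows l : 1 <= l ->
  balanced (qstarE l) (qstarA l) /\
  grows_by_one (qstarE l) (qstarA l) (qstarE l.+1) (qstarA l.+1).
Proof.
elim/ltn_ind: l => l IH l_gt0.
have [l_le2 | l_gt2] := leqP l 2.
  clear IH; case: l l_gt0 l_le2 => [|[|[|l]]] // _ _;
    rewrite /balanced /grows_by_one /qstarE /qstarA /=; lia.
have [bal_k grow_k] := IH l./2 ltac:(lia) ltac:(lia).
have [bal_k1 _] := IH (l./2).+1 ltac:(lia) ltac:(lia).
move: bal_k grow_k bal_k1; rewrite /balanced /grows_by_one.
rewrite (qstarE_rec (n := l)) ?(qstarA_rec (n := l));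
  rewrite ?(qstarE_rec (n := l.+1)) ?(qstarA_rec (n := l.+1)); try lia.
have -> : uphalf l.+1 = (l./2).+1 by lia.
have -> : (l.+1)./2 = uphalf l by [].
have -> : uphalf l = if odd l then (l./2).+1 else l./2 by case: ifP; lia.
by case: (odd l); lia.
Qed.

Lemma qstar_nondecreasing i : qstarE i <= qstarE i.+1 /\ qstarA i <= qstarA i.+1.
Proof.
case: i => [|i]; first by [].
have [bal grow] := qstar_balanced_grows (ltn0Sn i).
have [bal' _] := qstar_balanced_grows (ltn0Sn i.+1).
move: bal grow bal'; rewrite /balanced /grows_by_one; lia.
Qed.

(* An alternating prefix ending with forall has odd length if it starts with forall and even
   length if it starts with exists. *)
Definition qstarA_odd n := qstarA n + ~~ odd (qstarA n).

Definition qstarE_even n := qstarE n + odd (qstarE n).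

Lemma qstarA_odd_rec n : 3 <= n -> qstarA_odd n = (qstarE_even n./2).+1.
Proof. by move=> n_ge3; rewrite /qstarA_odd /qstarE_even qstarA_rec //=; case: odd. Qed.

Lemma qstarE_even_rec n : 2 <= n -> qstarE_even n = (qstarA_odd (uphalf n)).+1.
Proof. by move=> n_ge2; rewrite /qstarA_odd /qstarE_even qstarE_rec //=; case: odd. Qed.

Lemma qstarA_odd_homo : {homo qstarA_odd : m n / m <= n}.
Proof.
apply: homo_leq leqnn leq_trans _ => i; rewrite /qstarA_odd.
have [_ le_i] := qstar_nondecreasing i; lia.
Qed.

Lemma qstarE_even_homo : {homo qstarE_even : m n / m <= n}.
Proof.
apply: homo_leq leqnn leq_trans _ => i; rewrite /qstarE_even.
have [le_i _] := qstar_nondecreasing i; lia.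
Qed.

Lemma qstar_minn_rounded l : 1 <= l -> qstar l = minn (qstarA_odd l) (qstarE_even l).
Proof.
move=> /qstar_balanced_grows[]; rewrite /balanced /qstar /qstarA_odd /qstarE_even; lia.
Qed.

Lemma cover_oo a b h1 h2 :
  (forall z, a < z < b -> z - a <= h1 \/ b - z <= h2) <-> b - a <= h1 + h2 + 1.
Proof.
split=> [cover | le_ba z /andP[lt_az lt_zb]]; last lia.
rewrite leqNgt; apply/negP => lt_ba.
have /cover : a < (a + h1).+1 < b by lia.
lia.
Qed.

Lemma split_oc a b h1 h2 : 0 < h1 -> a < b ->
  (exists2 w, a < w <= b & w - a <= h1 /\ b - w <= h2) <-> b - a <= h1 + h2.
Proof.
move=> h1_gt0 lt_ab; split=> [[w w_in [le1 le2]] | le_ba]; first lia.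
by exists (minn b (a + h1)); lia.
Qed.

(** * Prenex formulas with a prescribed prefix *)

Definition TT : form := FEq TMin TMin.

Definition FF : form := FLt TMin TMin.

Definition FIte (g f1 f2 : form) : form := FOr (FAnd g f1) (FAnd (FNot g) f2).

Fixpoint quantify (p : seq (bool * nat)) (M : form) : form :=
  if p is (q, y) :: p' then (if q then FEx y else FAll y) (quantify p' M) else M.

Fixpoint alt_prefix (q : bool) (c d : nat) : seq (bool * nat) :=
  if c is c'.+1 then (q, d) :: alt_prefix (~~ q) c' d.+1 else [::].

Lemma alt_prefixS q c d : alt_prefix q c.+1 d = (q, d) :: alt_prefix (~~ q) c d.+1.
Proof. by []. Qed.

Lemma map_snd_alt_prefix q c d : map snd (alt_prefix q c d) = iota d c.
Proof. by elim: c q d => //= c IH q d; rewrite IH. Qed.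

Lemma size_alt_prefix q c d : size (alt_prefix q c d) = c.
Proof. by elim: c q d => //= c IH q d; rewrite IH. Qed.

Lemma alternating_alt_prefix q c d : alternating (map fst (alt_prefix q c d)).
Proof.
case: c => //= c; elim: c q d => //= c IH q d.
by rewrite IH andbT; case: q.
Qed.

Lemma last_alt_prefix q c d x : last x (map fst (alt_prefix q c.+1 d)) = q (+) odd c.
Proof.
elim: c q d x => [|c IH] q d x; first by rewrite /= addbF.
by rewrite alt_prefixS map_cons last_cons IH /=; case: q; rewrite /= ?negbK.
Qed.

Lemma ends_with_forall_alt_prefix c d :
  0 < c -> ends_with_forall (map fst (alt_prefix (~~ odd c) c d)).
Proof.
case: c => // c _; have := last_alt_prefix (~~ odd c.+1) c d true.
by rewrite alt_prefixS map_cons last_cons /ends_with_forall => ->; rewrite /= negbK addbb.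
Qed.

Lemma free_FIte x g M1 M2 : free x (FIte g M1 M2) = [|| free x g, free x M1 | free x M2].
Proof. by rewrite /=; case: (free x g). Qed.

Lemma qfree_FIte g M1 M2 : qfree (FIte g M1 M2) = [&& qfree g, qfree M1 & qfree M2].
Proof. by rewrite /=; case: (qfree g); rewrite ?andbT. Qed.

Lemma free_quantify x p M :
  free x (quantify p M) = (x \notin map snd p) && free x M.
Proof. by elim: p => //= -[[] y] p IH /=; rewrite IH inE negb_or eq_sym andbA. Qed.

Lemma qprefix_quantify p M : qfree M -> qprefix (quantify p M) = map fst p.
Proof. by move=> M_qfree; elim: p => [|[[] y] p IH] /=; rewrite ?IH //; case: M M_qfree. Qed.

Lemma prenex_quantify p M : qfree M -> prenex (quantify p M).
Proof. by move=> M_qfree; elim: p => [|[[] y] p] //; case: M M_qfree. Qed.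

Lemma nquant_qfree M : qfree M -> nquant M = 0.
Proof. by elim: M => //= [g IHg h IHh | g IHg h IHh] /andP[/IHg -> /IHh ->]. Qed.

Lemma nquant_quantify p M : qfree M -> nquant (quantify p M) = size p.
Proof. by move=> /nquant_qfree M0; elim: p => [|[[] y] p IH] /=; rewrite ?IH. Qed.

Lemma eval_term_ext m rho rho' t :
  (forall x, term_has x t -> rho x = rho' x) -> eval_term m rho t = eval_term m rho' t.
Proof. by case: t => //= x; apply; rewrite /= eqxx. Qed.

Lemma sat_ext m f rho rho' : (forall x, free x f -> rho x = rho' x) ->
  (sat m rho f <-> sat m rho' f).
Proof.
elim: f rho rho' => [s t|s t|g IH|g IHg h IHh|g IHg h IHh|y g IH|y g IH] rho rho' eq_rho /=.
- by rewrite !(@eval_term_ext m rho rho') // => x x_t; apply: eq_rho; rewrite /= x_t ?orbT.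
- by rewrite !(@eval_term_ext m rho rho') // => x x_t; apply: eq_rho; rewrite /= x_t ?orbT.
- by rewrite (IH rho rho').
- by rewrite (IHg rho rho') ?(IHh rho rho') // => x x_f; apply: eq_rho; rewrite /= x_f ?orbT.
- by rewrite (IHg rho rho') ?(IHh rho rho') // => x x_f; apply: eq_rho; rewrite /= x_f ?orbT.
all: have eq_upd a : sat m (upd rho y a) g <-> sat m (upd rho' y a) g.
all: try (apply: IH => x x_g; rewrite /upd; case: eqP => // /eqP y_x;
          by apply: eq_rho; rewrite /= x_g eq_sym y_x).
- by split=> -[a [le_am sat_a]]; exists a; split=> //; apply/eq_upd.
- by split=> sat_all a le_am; apply/eq_upd; apply: sat_all.
Qed.

Lemma quantify_congr m p M1 M2 rho :
  (forall rho', (forall x, x \notin map snd p -> rho' x = rho x) ->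
     (sat m rho' M1 <-> sat m rho' M2)) ->
  (sat m rho (quantify p M1) <-> sat m rho (quantify p M2)).
Proof.
elim: p rho => [|[q y] p IH] rho eq_M /=; first exact: eq_M.
have eq_upd a : sat m (upd rho y a) (quantify p M1) <-> sat m (upd rho y a) (quantify p M2).
  apply: IH => rho' eq_rho'; apply: eq_M => x; rewrite inE negb_or => /andP[x_y x_p].
  by rewrite eq_rho' // /upd (negbTE x_y).
case: q {eq_M} => /=.
- by split=> -[a [le_am sat_a]]; exists a; split=> //; apply/eq_upd.
- by split=> sat_all a le_am; apply/eq_upd; apply: sat_all.
Qed.

Lemma sat_quantify_TT m p rho : sat m rho (quantify p TT).
Proof. by elim: p rho => [|[[] y] p IH] rho /=; [by [] | by exists 0 | by move=> a _]. Qed.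

Lemma sat_quantify_FF m p rho : ~ sat m rho (quantify p FF).
Proof.
elim: p rho => [|[[] y] p IH] rho /=; first lia.
- by case=> a [_ /IH].
- by move/(_ 0 (leq0n m))/IH.
Qed.

Definition avoids (p : seq (bool * nat)) (g : form) : Prop :=
  forall x, x \in map snd p -> ~~ free x g.

Lemma sat_quantify_ite m p g M1 M2 rho : avoids p g ->
  (sat m rho (quantify p (FIte g M1 M2)) <->
   (sat m rho g /\ sat m rho (quantify p M1)) \/ (~ sat m rho g /\ sat m rho (quantify p M2))).
Proof.
move=> g_avoided.
have g_const rho' : (forall x, x \notin map snd p -> rho' x = rho x) ->
    (sat m rho' g <-> sat m rho g).
  move=> eq_rho'; apply: sat_ext => x x_g; apply: eq_rho'.
  by apply: contraL x_g => /g_avoided.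
case: (classic (sat m rho g)) => [g_rho|ng_rho].
- rewrite (@quantify_congr m p _ M1) => [|rho' /g_const]; first tauto.
  by rewrite /=; tauto.
- rewrite (@quantify_congr m p _ M2) => [|rho' /g_const]; first tauto.
  by rewrite /=; tauto.
Qed.

Lemma sat_quantify_guard_TT m p g M rho : avoids p g ->
  sat m rho (quantify p (FIte g M TT)) <-> (sat m rho g -> sat m rho (quantify p M)).
Proof.
move=> g_avoided; rewrite sat_quantify_ite //.
have := sat_quantify_TT m p rho; case: (classic (sat m rho g)); tauto.
Qed.

Lemma sat_quantify_guard_FF m p g M rho : avoids p g ->
  sat m rho (quantify p (FIte g M FF)) <-> sat m rho g /\ sat m rho (quantify p M).
Proof.
by move=> g_avoided; rewrite sat_quantify_ite //; have := @sat_quantify_FF m p rho; tauto.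
Qed.

(* One existential quantifier can serve two formulas when each of them already decides the
   guard. *)
Lemma sat_ex_ite m rho y p g M1 M2 : avoids p g ->
  (forall w, sat m (upd rho y w) (quantify p M1) -> sat m (upd rho y w) g) ->
  (forall w, sat m (upd rho y w) (quantify p M2) -> ~ sat m (upd rho y w) g) ->
  (sat m rho (quantify ((true, y) :: p) (FIte g M1 M2)) <->
   sat m rho (quantify ((true, y) :: p) M1) \/ sat m rho (quantify ((true, y) :: p) M2)).
Proof.
move=> g_avoided M1_g M2_ng /=; split.
- by case=> w [le_wm]; rewrite sat_quantify_ite // => -[[_ M1_w]|[_ M2_w]]; [left|right]; exists w.
- case=> -[w [le_wm Mi_w]]; exists w; split=> //; rewrite sat_quantify_ite //.
  + by left; split=> //; apply: M1_g.
  + by right; split=> //; apply: M2_ng.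
Qed.

Lemma sat_all_ite m rho y p g M1 M2 : avoids p g ->
  (forall w, ~ sat m (upd rho y w) g -> sat m (upd rho y w) (quantify p M1)) ->
  (forall w, sat m (upd rho y w) g -> sat m (upd rho y w) (quantify p M2)) ->
  (sat m rho (quantify ((false, y) :: p) (FIte g M1 M2)) <->
   sat m rho (quantify ((false, y) :: p) M1) /\ sat m rho (quantify ((false, y) :: p) M2)).
Proof.
move=> g_avoided ng_M1 g_M2 /=; split.
- by move=> all_ite; split=> w le_wm; move: (all_ite w le_wm);
    rewrite sat_quantify_ite // => -[[g_w M_w]|[ng_w M_w]]; auto.
- move=> [all_M1 all_M2] w le_wm; rewrite sat_quantify_ite //.
  case: (classic (sat m (upd rho y w) g)) => g_w; [left|right]; split=> //.
  + exact: all_M1.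
  + exact: all_M2.
Qed.

Lemma sat_alt_prefix_all m rho c y M :
  sat m rho (quantify (alt_prefix false c.+1 y) M) <->
  (forall z, z <= m -> sat m (upd rho y z) (quantify (alt_prefix true c y.+1) M)).
Proof. by []. Qed.

Lemma sat_alt_prefix_ex m rho c y M :
  sat m rho (quantify (alt_prefix true c.+1 y) M) <->
  (exists z, z <= m /\ sat m (upd rho y z) (quantify (alt_prefix false c y.+1) M)).
Proof. by []. Qed.

Lemma upd_eq rho y z : upd rho y z y = z.
Proof. by rewrite /upd eqxx. Qed.

Lemma upd_other rho x y z : x != y -> upd rho y z x = rho x.
Proof. by rewrite /upd => /negbTE ->. Qed.

Definition term_below (d : nat) (t : term) : bool := if t is TVar x then x < d else true.

Lemma term_below_has d t x : term_below d t -> term_has x t -> x < d.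
Proof. by case: t => //= y y_lt /eqP <-. Qed.

Lemma term_belowS d t : term_below d t -> term_below d.+1 t.
Proof. by case: t => //= x; lia. Qed.

Lemma eval_upd_below m rho d z t : term_below d t ->
  eval_term m (upd rho d z) t = eval_term m rho t.
Proof. by case: t => //= x x_lt; rewrite upd_other // neq_ltn x_lt. Qed.

Lemma eval_upd_var m rho d z : eval_term m (upd rho d z) (TVar d) = z.
Proof. exact: upd_eq. Qed.

(** * The sentences *)

Definition in_oo (a x b : term) : form := FAnd (FLt a x) (FLt x b).

Definition in_oc (a x b : term) : form := FAnd (FLt a x) (FNot (FLt b x)).

Definition var_le (x y : nat) : form := FNot (FLt (TVar y) (TVar x)).

Lemma free_in_oo e a x b y : term_below e a -> term_below e x -> term_below e b ->
  free y (in_oo a x b) -> y < e.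
Proof.
by move=> /term_below_has ha /term_below_has hx /term_below_has hb /= /orP[] /orP[]; auto.
Qed.

Lemma free_in_oc e a x b y : term_below e a -> term_below e x -> term_below e b ->
  free y (in_oc a x b) -> y < e.
Proof.
by move=> /term_below_has ha /term_below_has hx /term_below_has hb /= /orP[] /orP[]; auto.
Qed.

Lemma free_var_le x y z : free z (var_le x y) -> z = x \/ z = y.
Proof. by move=> /= /orP[] /eqP ->; auto. Qed.

Lemma avoids_alt_prefix q c e g : (forall x, free x g -> x < e) -> avoids (alt_prefix q c e) g.
Proof.
move=> g_below x; rewrite map_snd_alt_prefix mem_iota => /andP[e_le _].
by apply/negP => /g_below; lia.
Qed.

(* [phiA c n a b d] and [phiE c n a b d] say b - a <= n with c alternating quantifiers on the
   variables d, d+1, ...; the first starts with forall z in (a, b), the second with exists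
   w in (a, b].  In a split the halves share the next variable and [var_le d.+1 d] tells
   which half it serves.  For n <= 2 (resp. n <= 1) the step is not split and the
   sub-formula is the same statement with one quantifier less; this pads prefixes that are
   longer than needed.  A body with no quantifier left is false. *)
Definition splitA (rec : nat -> term -> term -> nat -> form) n a b d : form :=
  if n <= 2 then rec n a b d.+1
  else FIte (var_le d.+1 d) (rec n./2 a (TVar d) d.+1) (rec (n.-1 - n./2) (TVar d) b d.+1).

Definition splitE (rec : nat -> term -> term -> nat -> form) n a b d : form :=
  if n <= 1 then rec n a b d.+1
  else FIte (var_le d.+1 d) (rec (uphalf n) a (TVar d) d.+1) (rec n./2 (TVar d) b d.+1).

Fixpoint matA c n a b d {struct c} : form :=
  if c is c'.+1 then
    FIte (in_oo a (TVar d) b) (if c' is 0 then FF else splitA (matE c') n a b d) TT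
  else TT
with matE c n a b d {struct c} : form :=
  if c is c'.+1 then
    FIte (in_oc a (TVar d) b) (if c' is 0 then FF else splitE (matA c') n a b d) FF
  else TT.

Definition bodyA c n a b d : form := if c is 0 then FF else splitA (matE c) n a b d.

Definition bodyE c n a b d : form := if c is 0 then FF else splitE (matA c) n a b d.

Definition phiA c n a b d : form := quantify (alt_prefix false c d) (matA c n a b d).

Definition phiE c n a b d : form := quantify (alt_prefix true c d) (matE c n a b d).

Lemma matA_S c n a b d : matA c.+1 n a b d = FIte (in_oo a (TVar d) b) (bodyA c n a b d) TT.
Proof. by []. Qed.

Lemma matE_S c n a b d : matE c.+1 n a b d = FIte (in_oc a (TVar d) b) (bodyE c n a b d) FF.
Proof. by []. Qed.

Section SplitShape.

Variables (rec : nat -> term -> term -> nat -> form) (n : nat) (a b : term) (d : nat).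

Lemma qfree_splitA : (forall n a b d, qfree (rec n a b d)) -> qfree (splitA rec n a b d).
Proof. by rewrite /splitA => rec_qfree; case: ifP; rewrite ?qfree_FIte !rec_qfree. Qed.

Lemma qfree_splitE : (forall n a b d, qfree (rec n a b d)) -> qfree (splitE rec n a b d).
Proof. by rewrite /splitE => rec_qfree; case: ifP; rewrite ?qfree_FIte !rec_qfree. Qed.

Variables (x e : nat).
Hypotheses (a_below : term_below d a) (b_below : term_below d b) (lt_d1e : d.+1 < e).
Hypothesis rec_below : forall n a' b', term_below d.+1 a' -> term_below d.+1 b' ->
  free x (rec n a' b' d.+1) -> x < e.

Let a_belowS := term_belowS a_below.
Let b_belowS := term_belowS b_below.
Let d_below : term_below d.+1 (TVar d) := ltnSn d.

Lemma free_splitA : free x (splitA rec n a b d) -> x < e.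
Proof.
rewrite /splitA; case: ifP => _; first exact: rec_below.
by rewrite free_FIte => /or3P[/free_var_le[] ->|/rec_below|/rec_below]; [lia | lia | apply | apply].
Qed.

Lemma free_splitE : free x (splitE rec n a b d) -> x < e.
Proof.
rewrite /splitE; case: ifP => _; first exact: rec_below.
by rewrite free_FIte => /or3P[/free_var_le[] ->|/rec_below|/rec_below]; [lia | lia | apply | apply].
Qed.

End SplitShape.

Lemma qfree_mat c n a b d : qfree (matA c n a b d) && qfree (matE c n a b d).
Proof.
elim: c n a b d => // c IH n a b d.
have qfree_A n' a' b' d' : qfree (matA c n' a' b' d') by case/andP: (IH n' a' b' d').
have qfree_E n' a' b' d' : qfree (matE c n' a' b' d') by case/andP: (IH n' a' b' d').
rewrite matA_S matE_S !qfree_FIte /bodyA /bodyE.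
by case: c {IH} qfree_A qfree_E => // c qfree_A qfree_E; rewrite qfree_splitA ?qfree_splitE.
Qed.

Lemma free_mat c n a b d x : term_below d a -> term_below d b ->
  free x (matA c n a b d) || free x (matE c n a b d) -> x < d + c.
Proof.
elim: c n a b d => [|c IH] n a b d a_below b_below; first by [].
have guard_lt g : (free x g -> x < d.+1) -> free x g -> x < d + c.+1.
  by move=> g_lt /g_lt; lia.
have d_below : term_below d.+1 (TVar d) := ltnSn d.
have [a_belowS b_belowS] := (term_belowS a_below, term_belowS b_below).
rewrite matA_S matE_S !free_FIte => /orP[] /or3P[/guard_lt|body|//].
1,3: apply; by [apply: free_in_oo | apply: free_in_oc].
all: move: body; rewrite /bodyA /bodyE; case: c {guard_lt} IH => // c IH body; rewrite -addSnnS.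
1: apply: free_splitA body => //; first lia.
2: apply: free_splitE body => //; first lia.
all: by move=> n' a' b' a'_below b'_below x_free; apply: (IH n' a' b'); rewrite // x_free ?orbT.
Qed.

Section Unfolding.

Variables (m : nat) (a b : term) (d : nat).
Hypotheses (a_below : term_below d a) (b_below : term_below d b).

Let a_belowS := term_belowS a_below.
Let b_belowS := term_belowS b_below.

Lemma sat_matA_S c n rho :
  sat m rho (quantify (alt_prefix true c d.+1) (matA c.+1 n a b d)) <->
  (eval_term m rho a < rho d < eval_term m rho b ->
   sat m rho (quantify (alt_prefix true c d.+1) (bodyA c n a b d))).
Proof.
rewrite sat_quantify_guard_TT; last first.
  by apply: avoids_alt_prefix => x; apply: free_in_oo => //; exact: ltnSn.
by rewrite /=; split=> body /andP /body.
Qed.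

Lemma sat_matE_S c n rho :
  sat m rho (quantify (alt_prefix false c d.+1) (matE c.+1 n a b d)) <->
  (eval_term m rho a < rho d <= eval_term m rho b /\
   sat m rho (quantify (alt_prefix false c d.+1) (bodyE c n a b d))).
Proof.
rewrite sat_quantify_guard_FF; last first.
  by apply: avoids_alt_prefix => x; apply: free_in_oc => //; exact: ltnSn.
by rewrite /= [rho d <= _]leqNgt; split=> -[range body]; split=> //;
  [case: range => -> /negP | case/andP: range => -> /negP].
Qed.

Lemma sat_phiA_S c n rho : eval_term m rho b <= m ->
  sat m rho (phiA c.+1 n a b d) <->
  (forall z, eval_term m rho a < z < eval_term m rho b ->
   sat m (upd rho d z) (quantify (alt_prefix true c d.+1) (bodyA c n a b d))).
Proof.
move=> b_le_m; rewrite /phiA sat_alt_prefix_all.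
split=> [all_z z z_in | all_z z le_zm].
- by move: (all_z z ltac:(lia)); rewrite sat_matA_S !eval_upd_below // upd_eq; apply.
- by rewrite sat_matA_S !eval_upd_below // upd_eq; apply: all_z.
Qed.

Lemma sat_phiE_S c n rho : eval_term m rho b <= m ->
  sat m rho (phiE c.+1 n a b d) <->
  (exists2 w, eval_term m rho a < w <= eval_term m rho b &
   sat m (upd rho d w) (quantify (alt_prefix false c d.+1) (bodyE c n a b d))).
Proof.
move=> b_le_m; rewrite /phiE sat_alt_prefix_ex.
split=> [[w [le_wm]] | [w w_in body_w]].
- by rewrite sat_matE_S !eval_upd_below // upd_eq => -[]; exists w.
- by exists w; split; [lia | rewrite sat_matE_S !eval_upd_below // upd_eq].
Qed.

End Unfolding.

Lemma sat_splitA_ite m a b d c n1 n2 rho : term_below d a -> term_below d b ->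
  sat m rho (quantify (alt_prefix true c.+1 d.+1)
    (FIte (var_le d.+1 d) (matE c.+1 n1 a (TVar d) d.+1) (matE c.+1 n2 (TVar d) b d.+1))) <->
  sat m rho (phiE c.+1 n1 a (TVar d) d.+1) \/ sat m rho (phiE c.+1 n2 (TVar d) b d.+1).
Proof.
move=> /term_belowS a_below /term_belowS b_below.
have d_below : term_below d.+1 (TVar d) by exact: ltnSn.
have rho_d w : upd rho d.+1 w d = rho d by rewrite upd_other // neq_ltn ltnSn.
apply: (sat_ex_ite (p := alt_prefix false c d.+2)).
- by apply: avoids_alt_prefix => x /free_var_le[] ->; lia.
- by move=> w /sat_matE_S[] // /= /andP[_]; rewrite upd_eq rho_d leqNgt => /negP.
- by move=> w /sat_matE_S[] // /= /andP[]; rewrite upd_eq rho_d => lt_dw _ _ [].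
Qed.

Lemma sat_splitE_ite m a b d c n1 n2 rho : term_below d a -> term_below d b ->
  sat m rho (quantify (alt_prefix false c.+1 d.+1)
    (FIte (var_le d.+1 d) (matA c.+1 n1 a (TVar d) d.+1) (matA c.+1 n2 (TVar d) b d.+1))) <->
  sat m rho (phiA c.+1 n1 a (TVar d) d.+1) /\ sat m rho (phiA c.+1 n2 (TVar d) b d.+1).
Proof.
move=> /term_belowS a_below /term_belowS b_below.
have d_below : term_below d.+1 (TVar d) by exact: ltnSn.
have rho_d w : upd rho d.+1 w d = rho d by rewrite upd_other // neq_ltn ltnSn.
apply: (sat_all_ite (p := alt_prefix true c d.+2)).
- by apply: avoids_alt_prefix => x /free_var_le[] ->; lia.
- move=> w; rewrite /= upd_eq rho_d => lt_dw.
  by rewrite sat_matA_S // /= upd_eq rho_d => /andP[_]; lia.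
- move=> w; rewrite /= upd_eq rho_d => le_wd.
  by rewrite sat_matA_S // /= upd_eq rho_d => /andP[]; lia.
Qed.

Definition phiA_spec c := forall n a b d m rho,
  1 <= n -> term_below d a -> term_below d b -> odd c -> qstarA_odd n <= c ->
  eval_term m rho a <= eval_term m rho b <= m ->
  sat m rho (phiA c n a b d) <-> eval_term m rho b - eval_term m rho a <= n.

Definition phiE_spec c := forall n a b d m rho,
  1 <= n -> term_below d a -> term_below d b -> ~~ odd c -> qstarE_even n <= c ->
  eval_term m rho a < eval_term m rho b <= m ->
  sat m rho (phiE c n a b d) <-> eval_term m rho b - eval_term m rho a <= n.

Lemma phiA_spec_S c : phiE_spec c -> phiA_spec c.+1.
Proof.
move=> IH n a b d m rho n_gt0 a_below b_below odd_c bound /andP[le_ab le_bm].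
set va := eval_term m rho a; set vb := eval_term m rho b.
have d_below : term_below d.+1 (TVar d) := ltnSn d.
have [a_belowS b_belowS] := (term_belowS a_below, term_belowS b_below).
rewrite sat_phiA_S //; case: c IH odd_c bound => [|c] IH odd_c bound.
  have n1 : n = 1.
    case: (leqP n 1) => [|n_ge2]; first lia.
    by have := qstarA_odd_homo n_ge2; have -> : qstarA_odd 2 = 3 by []; lia.
  split=> [all_z | le_ba z /andP[]]; last lia.
  rewrite leqNgt; apply/negP => lt_ba.
  by apply: (sat_quantify_FF (all_z va.+1 _)); lia.
rewrite /bodyA /splitA; case: ifP => n_le2.
  have body_iff z : va < z < vb ->
      sat m (upd rho d z) (phiE c.+1 n a b d.+1) <-> vb - va <= n.
    move=> z_in; rewrite IH ?eval_upd_below //; last lia.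
    apply: leq_trans (qstarE_even_homo n_le2) _.
    by have -> : qstarE_even 2 = 2 by []; move: odd_c => /=; lia.
  split=> [all_z | le_ba z z_in]; last by apply/body_iff.
  rewrite leqNgt; apply/negP => lt_ba.
  have z_in : va < va.+1 < vb by lia.
  by move: (all_z _ z_in); rewrite body_iff //; lia.
have body_iff z : va < z < vb ->
    sat m (upd rho d z) (quantify (alt_prefix true c.+1 d.+1)
      (FIte (var_le d.+1 d) (matE c.+1 n./2 a (TVar d) d.+1)
                            (matE c.+1 (n.-1 - n./2) (TVar d) b d.+1))) <->
    z - va <= n./2 \/ vb - z <= n.-1 - n./2.
  move=> z_in; rewrite sat_splitA_ite //.
  have bound1 : qstarE_even n./2 <= c.+1 by move: bound; rewrite qstarA_odd_rec //; lia.
  have bound2 : qstarE_even (n.-1 - n./2) <= c.+1.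
    by apply: leq_trans (qstarE_even_homo _) bound1; lia.
  rewrite IH ?(IH _ _ _ _ _ _ _ d_below b_belowS) ?eval_upd_var ?eval_upd_below //; lia.
rewrite -[n in _ <= n](_ : n./2 + (n.-1 - n./2) + 1 = n); last lia.
by rewrite -cover_oo; split=> all_z z z_in; move: (all_z z z_in); rewrite body_iff.
Qed.

Lemma phiE_spec_S c : phiA_spec c -> phiE_spec c.+1.
Proof.
move=> IH n a b d m rho n_gt0 a_below b_below even_c bound /andP[lt_ab le_bm].
set va := eval_term m rho a; set vb := eval_term m rho b.
have d_below : term_below d.+1 (TVar d) := ltnSn d.
have [a_belowS b_belowS] := (term_belowS a_below, term_belowS b_below).
rewrite sat_phiE_S //; case: c IH even_c bound => [|c] IH even_c bound.
  by move: bound; have := qstarE_even_homo n_gt0; rewrite /=; lia.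
have odd_c : odd c.+1 by move: even_c => /=; rewrite negbK.
rewrite /bodyE /splitE; case: ifP => n_le1.
  have body_iff w : va < w <= vb ->
      sat m (upd rho d w) (phiA c.+1 n a b d.+1) <-> vb - va <= n.
    move=> w_in; rewrite IH ?eval_upd_below //; last lia.
    exact: leq_trans (qstarA_odd_homo n_le1) _.
  split=> [[w w_in /body_iff] | le_ba]; first exact.
  by exists vb; [lia | apply/body_iff => //; lia].
have body_iff w : va < w <= vb ->
    sat m (upd rho d w) (quantify (alt_prefix false c.+1 d.+1)
      (FIte (var_le d.+1 d) (matA c.+1 (uphalf n) a (TVar d) d.+1)
                            (matA c.+1 n./2 (TVar d) b d.+1))) <->
    w - va <= uphalf n /\ vb - w <= n./2.
  move=> w_in; rewrite sat_splitE_ite //.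
  have bound1 : qstarA_odd (uphalf n) <= c.+1 by move: bound; rewrite qstarE_even_rec //; lia.
  have bound2 : qstarA_odd n./2 <= c.+1.
    by apply: leq_trans (qstarA_odd_homo _) bound1; lia.
  rewrite IH ?(IH _ _ _ _ _ _ _ d_below b_belowS) ?eval_upd_var ?eval_upd_below //; lia.
rewrite -[n in _ <= n](_ : uphalf n + n./2 = n); last lia.
rewrite -split_oc //; last lia.
by split=> -[w w_in body_w]; exists w => //; move: body_w; rewrite body_iff.
Qed.

Lemma phi_spec c : phiA_spec c /\ phiE_spec c.
Proof.
elim: c => [|c [IHA IHE]]; last by split; [apply: phiA_spec_S | apply: phiE_spec_S].
split=> // n a b d m rho n_gt0 _ _ _.
by have := qstarE_even_homo n_gt0; rewrite leqn0 => /[swap] /eqP ->.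
Qed.

Definition sigma_matrix c l : form := (if odd c then matA else matE) c l TMin TMax 0.

Definition sigma c l : form := quantify (alt_prefix (~~ odd c) c 0) (sigma_matrix c l).

Lemma qfree_sigma_matrix c l : qfree (sigma_matrix c l).
Proof. by rewrite /sigma_matrix; case/andP: (qfree_mat c l TMin TMax 0); case: odd. Qed.

Lemma sentence_sigma c l : sentence (sigma c l).
Proof.
move=> x; rewrite free_quantify map_snd_alt_prefix mem_iota leq0n add0n /=.
case x_free: (free x (sigma_matrix c l)); last by rewrite andbF.
suff -> : x < c by [].
apply: (@free_mat c l TMin TMax 0 x) => //.
by move: x_free; rewrite /sigma_matrix; case: odd => ->; rewrite ?orbT.
Qed.

Lemma holds_sigma c l m : 1 <= l -> 0 < m ->
  (if odd c then qstarA_odd l else qstarE_even l) <= c ->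
  holds m (sigma c l) <-> m <= l.
Proof.
move=> l_gt0 m_gt0; rewrite /holds /sigma /sigma_matrix.
have [spec_A spec_E] := phi_spec c.
case: ifP => [odd_c | even_c] bound.
- by rewrite spec_A /= ?subn0 ?odd_c ?leqnn.
- by rewrite spec_E /= ?subn0 ?even_c ?leqnn ?m_gt0.
Qed.

Lemma sigma_separates c l : 1 <= l ->
  (if odd c then qstarA_odd l else qstarE_even l) <= c -> separates_le_gt l (sigma c l).
Proof.
move=> l_gt0 bound; split=> m m_range.
- by apply/holds_sigma => //; lia.
- by rewrite holds_sigma //; lia.
Qed.

Theorem mainTheorem4 :
  forall l : nat, 1 <= l ->
  exists sigma : form,
    [/\ sentence sigma, prenex sigma,
        nquant sigma = qstar l,
        alternating (qprefix sigma) && ends_with_forall (qprefix sigma)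
      & separates_le_gt l sigma].
Proof.
move=> l l_gt0; set c := qstar l.
have qstarE_even_ge2 : 2 <= qstarE_even l by exact: (qstarE_even_homo l_gt0).
have bound : (if odd c then qstarA_odd l else qstarE_even l) <= c.
  by rewrite /c qstar_minn_rounded // /qstarA_odd /qstarE_even; case: ifP; lia.
have c_gt0 : 0 < c.
  by rewrite /c qstar_minn_rounded // /qstarA_odd; lia.
exists (sigma c l); split.
- exact: sentence_sigma.
- exact/prenex_quantify/qfree_sigma_matrix.
- by rewrite nquant_quantify ?qfree_sigma_matrix // size_alt_prefix.
- by rewrite qprefix_quantify ?qfree_sigma_matrix // alternating_alt_prefix
    ends_with_forall_alt_prefix.
- exact: sigma_separates.
Qed.
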